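(* Let $M=(Q,c_1,c_2)$ be a Minsky machine with instruction sequence $Q=(q_1,\dots,q_N)$, and let $T_{\mathrm{comp}}$ be the product transition system over variables $\{pc,x,z_1,z_2,y_1,y_2,c_1,c_2,q\}$ with $\mathit{Init}_{\mathrm{comp}} := \mathit{Init}\wedge c_1=0\wedge c_2=0\wedge q=1$ and $\mathit{TR}_{\mathrm{comp}} := q\neq N\wedge \mathit{TR}\wedge \mathit{TR}_M$, where $\mathit{Init},\mathit{TR}$ are those of $T_{\mathrm{Prog}}$ and $\mathit{TR}_M$ is the QFLIA formula over $\{c_1,c_2,q,c_1',c_2',q'\}$ encoding one step of $M$ (as a disjunction over $j\in\{1,\dots,N-1\}$ of $q=j$ conjoined with the effect of instruction $q_j$). In each step the product thus performs one step of $T_{\mathrm{Prog}}$ and one step of $M$ simultaneously, and it has no transitions once $M$ is at its halting instruction $q_N$. Let $P := (pc=\mathrm{end})\to(y_2=2y_1)$. Then $T_{\mathrm{comp}}$ has an inductive invariant that is a QFLIA formula over its variables if and only if $M$ halts (i.e., the run of $M$ from $c_1=c_2=0$ at instruction $q_1$ reaches $q_N$).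
   Context: QFLIA (quantifier-free linear integer arithmetic) formulas are built from integer-valued variables, integer constants, addition, multiplication by integer constants, the relations $=,<,\le$, and Boolean connectives, with no quantifiers; all variables range over $\mathbb{Z}$. A transition system is a tuple $T=(V,\mathit{Init},\mathit{TR})$ where $V$ is a finite set of integer variables, $\mathit{Init}$ is a QFLIA formula over $V$, and $\mathit{TR}$ is a QFLIA formula over $V\uplus V'$, where $V'=\{v' : v\in V\}$ is a primed copy of $V$. A state is an assignment $V\to\mathbb{Z}$. The initial states are those satisfying $\mathit{Init}$. A pair of states $(s,t)$ is a transition if $\mathit{TR}$ holds when unprimed variables take their values from $s$ and primed variables from $t$. Reachable states are those reachable from an initial state by finitely many transitions. A safety property is a QFLIA formula $P$ over $V$. We write $T\models P$ if every reachable state satisfies $P$. An inductive invariant for $T$ and $P$ is a formula $I$ over $V$ such that: (i) $\mathit{Init}\to I$ is valid; (ii) $I\wedge \mathit{TR}\to I'$ is valid, where $I'$ is obtained from $I$ by replacing each $v\in V$ with $v'$; and (iii) $I\to P$ is valid. A Minsky (2-counter) machine $M=(Q,c_1,c_2)$ has two counters $c_1,c_2$ ranging over $\mathbb{N}$, both initially $0$, and a finite instruction sequence $Q=(q_1,\dots,q_N)$, where $q_1$ is the first instruction and $q_N$ is the halting instruction. Each other instruction is one of: $i_k$ (increment $c_k$), $d_k$ (decrement $c_k$; if $c_k=0$ it stays $0$), or $t_k(j)$ (if $c_k=0$ go to instruction $j$). After each instruction control passes to the next instruction, except when a test $t_k(j)$ finds $c_k=0$, in which case control passes to instruction $j$.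 The transition system $T_{\mathrm{Prog}}$ has variables $pc,x,z_1,z_2,y_1,y_2$, with locations encoded as integers $\mathrm{start}=0$, $\mathrm{loop}_1=1$, $\mathrm{loop}_2=2$, $\mathrm{end}=3$. Its initial formula is $\mathit{Init} := pc=\mathrm{start}\wedge x>0\wedge z_1=x\wedge z_2=2x\wedge y_1=0\wedge y_2=0$. Its transition formula $\mathit{TR}$ is the disjunction of the following cases, where in each case every variable of $T_{\mathrm{Prog}}$ not mentioned keeps its value: (1) $pc\in\{\mathrm{start},\mathrm{loop}_1\}\wedge z_1>0\wedge pc'=\mathrm{loop}_1\wedge z_1'=z_1-1\wedge y_1'=y_1+x$; (2) $pc\in\{\mathrm{start},\mathrm{loop}_1\}\wedge z_1\le 0\wedge pc'=\mathrm{loop}_2$; (3) $pc=\mathrm{loop}_2\wedge z_2>0\wedge pc'=\mathrm{loop}_2\wedge z_2'=z_2-1\wedge y_2'=y_2+x$; (4) $pc=\mathrm{loop}_2\wedge z_2\le 0\wedge pc'=\mathrm{end}$; (5) $pc=\mathrm{end}\wedge pc'=\mathrm{end}$. This encodes the program that, on input $x>0$, adds $x$ to $y_1$ exactly $x$ times, then adds $x$ to $y_2$ exactly $2x$ times, and then stays at $\mathrm{end}$. *)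

From Stdlib Require Import ZArith List.
Import ListNotations.
Open Scope Z_scope.

Inductive term (X : Type) : Type :=
| TVar : X -> term X
| TConst : Z -> term X
| TAdd : term X -> term X -> term X
| TMul : Z -> term X -> term X.

Inductive formula (X : Type) : Type :=
| FTrue : formula X
| FFalse : formula X
| FEq : term X -> term X -> formula X
| FLt : term X -> term X -> formula X
| FLe : term X -> term X -> formula X
| FNot : formula X -> formula X
| FAnd : formula X -> formula X -> formula X
| FOr : formula X -> formula X -> formula X
| FImp : formula X -> formula X -> formula X.

Arguments TVar {X}. Arguments TConst {X}. Arguments TAdd {X}. Arguments TMul {X}.
Arguments FTrue {X}. Arguments FFalse {X}. Arguments FEq {X}. Arguments FLt {X}.
Arguments FLe {X}. Arguments FNot {X}. Arguments FAnd {X}. Arguments FOr {X}.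
Arguments FImp {X}.

Fixpoint teval {X} (e : X -> Z) (t : term X) : Z :=
  match t with
  | TVar x => e x
  | TConst c => c
  | TAdd a b => teval e a + teval e b
  | TMul c a => c * teval e a
  end.

Fixpoint holds {X} (e : X -> Z) (f : formula X) : Prop :=
  match f with
  | FTrue => True
  | FFalse => False
  | FEq a b => teval e a = teval e b
  | FLt a b => teval e a < teval e b
  | FLe a b => teval e a <= teval e b
  | FNot g => ~ holds e g
  | FAnd g h => holds e g /\ holds e h
  | FOr g h => holds e g \/ holds e h
  | FImp g h => holds e g -> holds e h
  end.

Fixpoint tmap {X Y} (r : X -> Y) (t : term X) : term Y :=
  match t with
  | TVar x => TVar (r x)
  | TConst c => TConst c
  | TAdd a b => TAdd (tmap r a) (tmap r b)
  | TMul c a => TMul c (tmap r a)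
  end.

Fixpoint fmap {X Y} (r : X -> Y) (f : formula X) : formula Y :=
  match f with
  | FTrue => FTrue
  | FFalse => FFalse
  | FEq a b => FEq (tmap r a) (tmap r b)
  | FLt a b => FLt (tmap r a) (tmap r b)
  | FLe a b => FLe (tmap r a) (tmap r b)
  | FNot g => FNot (fmap r g)
  | FAnd g h => FAnd (fmap r g) (fmap r h)
  | FOr g h => FOr (fmap r g) (fmap r h)
  | FImp g h => FImp (fmap r g) (fmap r h)
  end.

Definition valid {X} (f : formula X) : Prop := forall e : X -> Z, holds e f.

Definition FOrs {X} (l : list (formula X)) : formula X := fold_right FOr FFalse l.

(** * Transition systems: V is the variable type; the primed copy V' is
    represented by [inr] in [V + V] (unprimed variables are [inl]). *)
Record TS (V : Type) := mkTS { ts_init : formula V; ts_tr : formula (V + V) }.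
Arguments mkTS {V}. Arguments ts_init {V}. Arguments ts_tr {V}.

Definition prime_ {V} (I : formula V) : formula (V + V) := fmap inr I.

Definition inductive_invariant {V} (T : TS V) (P I : formula V) : Prop :=
  valid (FImp (ts_init T) I) /\
  valid (FImp (FAnd (fmap inl I) (ts_tr T)) (prime_ I)) /\
  valid (FImp I P).

Inductive counter := C1 | C2.

Inductive instr :=
| Inc : counter -> instr
| Dec : counter -> instr
| Test : counter -> nat -> instr.   (* t_k(j): if c_k = 0 go to instruction j *)

(** A machine is given by the list [prog] = (q_1, ..., q_{N-1}) of its
    non-halting instructions; N := length prog + 1 and q_N is the halting one. *)
Definition mN (prog : list instr) : nat := S (length prog).

Definition wf_machine (prog : list instr) : Prop :=
  forall k j, In (Test k j) prog -> (1 <= j <= mN prog)%nat.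

(** configurations: (current instruction index, c1, c2) *)
Definition config := (nat * nat * nat)%type.

Definition getc (k : counter) (c1 c2 : nat) : nat :=
  match k with C1 => c1 | C2 => c2 end.
Definition setc (k : counter) (v c1 c2 : nat) : nat * nat :=
  match k with C1 => (v, c2) | C2 => (c1, v) end.

Definition mstep (prog : list instr) (s t : config) : Prop :=
  let '(q, c1, c2) := s in
  (1 <= q < mN prog)%nat /\
  exists i, nth_error prog (q - 1) = Some i /\
  match i with
  | Inc k => let '(d1, d2) := setc k (S (getc k c1 c2)) c1 c2 in t = (S q, d1, d2)
  | Dec k => let '(d1, d2) := setc k (Nat.pred (getc k c1 c2)) c1 c2 in t = (S q, d1, d2)
  | Test k j => if Nat.eqb (getc k c1 c2) 0 then t = (j, c1, c2) else t = (S q, c1, c2)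
  end.

Inductive mreach (prog : list instr) : config -> Prop :=
| mreach_init : mreach prog (1%nat, 0%nat, 0%nat)
| mreach_step : forall s t, mreach prog s -> mstep prog s t -> mreach prog t.

Definition halts (prog : list instr) : Prop :=
  exists c1 c2, mreach prog (mN prog, c1, c2).

Inductive Var := pc | x | z1 | z2 | y1 | y2 | c1 | c2 | q.

Definition loc_start : Z := 0.
Definition loc_loop1 : Z := 1.
Definition loc_loop2 : Z := 2.
Definition loc_end : Z := 3.

Definition Vu (v : Var) : term (Var + Var) := TVar (inl v).
Definition Vp (v : Var) : term (Var + Var) := TVar (inr v).
Definition K {X} (c : Z) : term X := TConst c.
Definition keep (v : Var) : formula (Var + Var) := FEq (Vp v) (Vu v).
Definition keeps (l : list Var) : formula (Var + Var) := fold_right FAnd FTrue (map keep l).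
Definition FNeq {X} (a b : term X) : formula X := FNot (FEq a b).

Definition Init_prog : formula Var :=
  FAnd (FEq (TVar pc) (K loc_start))
  (FAnd (FLt (K 0) (TVar x))
  (FAnd (FEq (TVar z1) (TVar x))
  (FAnd (FEq (TVar z2) (TMul 2 (TVar x)))
  (FAnd (FEq (TVar y1) (K 0)) (FEq (TVar y2) (K 0)))))).

Definition TR_prog : formula (Var + Var) :=
  let pc_sl := FOr (FEq (Vu pc) (K loc_start)) (FEq (Vu pc) (K loc_loop1)) in
  FOrs [
    FAnd pc_sl (FAnd (FLt (K 0) (Vu z1)) (FAnd (FEq (Vp pc) (K loc_loop1))
      (FAnd (FEq (Vp z1) (TAdd (Vu z1) (K (-1))))
      (FAnd (FEq (Vp y1) (TAdd (Vu y1) (Vu x))) (keeps [x; z2; y2])))));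
    FAnd pc_sl (FAnd (FLe (Vu z1) (K 0)) (FAnd (FEq (Vp pc) (K loc_loop2))
      (keeps [x; z1; z2; y1; y2])));
    FAnd (FEq (Vu pc) (K loc_loop2)) (FAnd (FLt (K 0) (Vu z2))
      (FAnd (FEq (Vp pc) (K loc_loop2))
      (FAnd (FEq (Vp z2) (TAdd (Vu z2) (K (-1))))
      (FAnd (FEq (Vp y2) (TAdd (Vu y2) (Vu x))) (keeps [x; z1; y1])))));
    FAnd (FEq (Vu pc) (K loc_loop2)) (FAnd (FLe (Vu z2) (K 0))
      (FAnd (FEq (Vp pc) (K loc_end)) (keeps [x; z1; z2; y1; y2])));
    FAnd (FEq (Vu pc) (K loc_end)) (FAnd (FEq (Vp pc) (K loc_end))
      (keeps [x; z1; z2; y1; y2]))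
  ].

Definition cvar (k : counter) : Var := match k with C1 => c1 | C2 => c2 end.
Definition other (k : counter) : Var := match k with C1 => c2 | C2 => c1 end.

Definition effect (j : nat) (i : instr) : formula (Var + Var) :=
  let next := FEq (Vp q) (K (Z.of_nat (S j))) in
  match i with
  | Inc k => FAnd next (FAnd (FEq (Vp (cvar k)) (TAdd (Vu (cvar k)) (K 1))) (keep (other k)))
  | Dec k => FAnd next (FAnd (keep (other k))
               (FOr (FAnd (FEq (Vu (cvar k)) (K 0)) (FEq (Vp (cvar k)) (K 0)))
                    (FAnd (FLt (K 0) (Vu (cvar k)))
                          (FEq (Vp (cvar k)) (TAdd (Vu (cvar k)) (K (-1)))))))
  | Test k t => FAnd (keeps [c1; c2])
               (FOr (FAnd (FEq (Vu (cvar k)) (K 0)) (FEq (Vp q) (K (Z.of_nat t))))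
                    (FAnd (FNeq (Vu (cvar k)) (K 0)) next))
  end.

Fixpoint TR_M_from (j : nat) (l : list instr) : list (formula (Var + Var)) :=
  match l with
  | [] => []
  | i :: l' => FAnd (FEq (Vu q) (K (Z.of_nat j))) (effect j i) :: TR_M_from (S j) l'
  end.

Definition TR_M (prog : list instr) : formula (Var + Var) := FOrs (TR_M_from 1%nat prog).

Definition T_comp (prog : list instr) : TS Var :=
  mkTS (FAnd Init_prog (FAnd (FEq (TVar c1) (K 0))
          (FAnd (FEq (TVar c2) (K 0)) (FEq (TVar q) (K 1)))))
       (FAnd (FNeq (Vu q) (K (Z.of_nat (mN prog)))) (FAnd TR_prog (TR_M prog))).

Definition P_prop : formula Var :=
  FImp (FEq (TVar pc) (K loc_end)) (FEq (TVar y2) (TMul 2 (TVar y1))).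

(* If M halts after n steps, the product performs at most n transitions, and every state
   reachable in k steps is described by a QFLIA formula uniformly in the input x: for x > k
   the program is still in its first loop and the state is a linear function of x, while the
   finitely many inputs x <= k give concrete states.  The disjunction over k <= n of
   "configuration of M after k steps /\ program state after k steps" is the invariant.

   If M does not halt, the product runs for ever.  Let I be an inductive invariant and v a
   large input.  After v+1 steps the program reaches loop2 with y1 = v*v while every other
   variable is O(v).  A QFLIA formula cannot distinguish y1 = v*v from y1 = v*v+1 when
   y1 dominates all its other constants and variables ([holds_large_value]), so I also holds
   in the unreachable state with y1 = v*v+1; running loop2 from there, inductiveness yields a
   state in I with pc = end and y2 = 2 v*v <> 2 y1, contradicting I -> P. *)

From Stdlib Require Import ZArith List Lia Classical.
Open Scope Z_scope.

Lemma teval_ext {X} (e e' : X -> Z) (t : term X) :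
  (forall v, e v = e' v) -> teval e t = teval e' t.
Proof. intros H; induction t; cbn; congruence. Qed.

Lemma holds_ext {X} (e e' : X -> Z) (f : formula X) :
  (forall v, e v = e' v) -> (holds e f <-> holds e' f).
Proof. intros H; induction f; cbn; rewrite ?(teval_ext e e' _ H); tauto. Qed.

Lemma teval_tmap {X Y} (r : X -> Y) (e : Y -> Z) (t : term X) :
  teval e (tmap r t) = teval (fun v => e (r v)) t.
Proof. induction t; cbn; congruence. Qed.

Lemma holds_fmap {X Y} (r : X -> Y) (e : Y -> Z) (f : formula X) :
  holds e (fmap r f) <-> holds (fun v => e (r v)) f.
Proof. induction f; cbn; rewrite ?teval_tmap; tauto. Qed.

Lemma holds_FOrs {X} (e : X -> Z) (l : list (formula X)) :
  holds e (FOrs l) <-> exists f, In f l /\ holds e f.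
Proof.
  induction l as [| g l IH]; cbn.
  - split; [tauto | intros (f & [] & _)].
  - rewrite IH. split.
    + intros [H | (f & Hin & Hf)]; eauto.
    + intros (f & [<- | Hin] & Hf); eauto.
Qed.

Definition join {V} (e e' : V -> Z) : V + V -> Z :=
  fun s => match s with inl v => e v | inr v => e' v end.

Lemma consecution_iff {V} (T : TS V) (I : formula V) :
  valid (FImp (FAnd (fmap inl I) (ts_tr T)) (prime_ I)) <->
  forall e e', holds e I -> holds (join e e') (ts_tr T) -> holds e' I.
Proof.
  unfold valid, prime_; cbn. split.
  - intros H e e' HI HT. specialize (H (join e e')). rewrite !holds_fmap in H.
    exact (H (conj HI HT)).
  - intros H ee [HI HT]. rewrite holds_fmap in *. apply (H _ _ HI).
    apply (holds_ext ee); [intros [v | v]; reflexivity | exact HT].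
Qed.

(** * QFLIA formulas cannot tell large values of a variable apart *)

Fixpoint tsize {X} (t : term X) : Z :=
  match t with
  | TVar _ => 1
  | TConst c => Z.abs c
  | TAdd a b => tsize a + tsize b
  | TMul c a => Z.abs c * tsize a
  end.

Fixpoint fsize {X} (f : formula X) : Z :=
  match f with
  | FTrue | FFalse => 0
  | FEq a b | FLt a b | FLe a b => tsize a + tsize b
  | FNot g => fsize g
  | FAnd g h | FOr g h | FImp g h => fsize g + fsize h
  end.

Lemma tsize_nonneg {X} (t : term X) : 0 <= tsize t.
Proof. induction t; cbn; lia. Qed.

Lemma fsize_nonneg {X} (f : formula X) : 0 <= fsize f.
Proof.
  induction f; cbn; try pose proof (tsize_nonneg t); try pose proof (tsize_nonneg t0); lia.
Qed.

Lemma large_affine_sign (d r v v' : Z) : Z.abs r < v -> Z.abs r < v' ->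
  (d * v + r < 0 <-> d * v' + r < 0) /\ (d * v + r = 0 <-> d * v' + r = 0).
Proof.
  intros Hv Hv'. destruct (Z.lt_trichotomy d 0) as [Hd | [-> | Hd]].
  - assert (d * v <= - v) by nia. assert (d * v' <= - v') by nia. lia.
  - lia.
  - assert (v <= d * v) by nia. assert (v' <= d * v') by nia. lia.
Qed.

Section LargeValues.

Variable X : Type.
Hypothesis X_eq_dec : forall a b : X, {a = b} + {a <> b}.
Variable y : X.

Fixpoint coef (t : term X) : Z :=
  match t with
  | TVar z => if X_eq_dec z y then 1 else 0
  | TConst _ => 0
  | TAdd a b => coef a + coef b
  | TMul c a => c * coef a
  end.

Lemma rest_agree e e' t : (forall z, z <> y -> e z = e' z) ->
  teval e t - coef t * e y = teval e' t - coef t * e' y.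
Proof.
  intros H; induction t as [z | c | a IHa b IHb | c a IHa]; cbn [teval coef].
  - destruct (X_eq_dec z y) as [-> | Hz]; cbv beta iota; [lia | rewrite (H z Hz); lia].
  - lia.
  - lia.
  - nia.
Qed.

Lemma rest_bound e W t : (forall z, z <> y -> Z.abs (e z) <= W) -> 1 <= W ->
  Z.abs (teval e t - coef t * e y) <= tsize t * W.
Proof.
  intros H HW; induction t as [z | c | a IHa b IHb | c a IHa]; cbn [teval coef tsize].
  - destruct (X_eq_dec z y) as [-> | Hz]; cbv beta iota; [lia | specialize (H z Hz); lia].
  - pose proof (Z.abs_nonneg c). nia.
  - lia.
  - replace (c * teval e a - c * coef a * e y) with (c * (teval e a - coef a * e y)) by ring.
    rewrite Z.abs_mul. pose proof (Z.abs_nonneg c). nia.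
Qed.

Lemma compare_large e e' W a b :
  (forall z, z <> y -> e z = e' z) -> (forall z, z <> y -> Z.abs (e z) <= W) -> 1 <= W ->
  (tsize a + tsize b) * W < e y -> (tsize a + tsize b) * W < e' y ->
  (teval e a - teval e b < 0 <-> teval e' a - teval e' b < 0) /\
  (teval e a - teval e b = 0 <-> teval e' a - teval e' b = 0).
Proof.
  intros Hag Hb HW Hv Hv'.
  pose proof (rest_bound e W a Hb HW) as Ba. pose proof (rest_bound e W b Hb HW) as Bb.
  pose proof (rest_agree e e' a Hag) as Ea. pose proof (rest_agree e e' b Hag) as Eb.
  set (r := (teval e a - coef a * e y) - (teval e b - coef b * e y)).
  replace (teval e a - teval e b) with ((coef a - coef b) * e y + r) by (unfold r; ring).
  replace (teval e' a - teval e' b) with ((coef a - coef b) * e' y + r) by (unfold r; lia).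
  apply large_affine_sign; unfold r; lia.
Qed.

Lemma holds_large_value f e e' W :
  (forall z, z <> y -> e z = e' z) -> (forall z, z <> y -> Z.abs (e z) <= W) -> 1 <= W ->
  fsize f * W < e y -> fsize f * W < e' y -> (holds e f <-> holds e' f).
Proof.
  intros Hag Hb HW.
  induction f as [| | a b | a b | a b | g IH | g IH h IH' | g IH h IH' | g IH h IH'];
    cbn [holds fsize]; intros Hv Hv'.
  1-2: tauto.
  1-3: destruct (compare_large e e' W a b Hag Hb HW Hv Hv'); lia.
  1: rewrite IH by assumption; tauto.
  all: pose proof (fsize_nonneg g); pose proof (fsize_nonneg h); rewrite IH, IH' by nia; tauto.
Qed.

End LargeValues.

Record PState := mkPS { ppc : Z; px : Z; pz1 : Z; pz2 : Z; py1 : Z; py2 : Z }.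

Definition pstate_of (e : Var -> Z) : PState := mkPS (e pc) (e x) (e z1) (e z2) (e y1) (e y2).

(* T_Prog is deterministic: this is its successor function (identity at pc = end). *)
Definition pstep (s : PState) : PState :=
  let '(mkPS l v u w r t) := s in
  if orb (l =? loc_start) (l =? loc_loop1) then
    if 0 <? u then mkPS loc_loop1 v (u - 1) w (r + v) t else mkPS loc_loop2 v u w r t
  else if l =? loc_loop2 then
    if 0 <? w then mkPS loc_loop2 v u (w - 1) r (t + v) else mkPS loc_end v u w r t
  else s.

Ltac case_Z_tests :=
  repeat match goal with
  | |- context [Z.eqb ?a ?b] => destruct (Z.eqb_spec a b)
  | |- context [Z.ltb ?a ?b] => destruct (Z.ltb_spec a b)
  | H : context [Z.eqb ?a ?b] |- _ => destruct (Z.eqb_spec a b)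
  | H : context [Z.ltb ?a ?b] |- _ => destruct (Z.ltb_spec a b)
  end.

Lemma TR_prog_iff e e' :
  holds (join e e') TR_prog <-> 0 <= e pc <= 3 /\ pstate_of e' = pstep (pstate_of e).
Proof.
  unfold TR_prog, FOrs, keeps, keep, Vu, Vp, K, pstate_of, pstep,
    loc_start, loc_loop1, loc_loop2, loc_end; cbn. split.
  - intros H.
    repeat match goal with H : _ /\ _ |- _ => destruct H | H : _ \/ _ |- _ => destruct H end;
      try contradiction; (split; [lia |]); case_Z_tests; cbn; first [exfalso; lia | f_equal; lia].
  - intros [Hr H]. case_Z_tests; cbn in H; injection H; intros; try (exfalso; lia);
      first [ left; lia | right; left; lia | right; right; left; lia
            | right; right; right; left; lia | right; right; right; right; left; lia ].
Qed.

Lemma pstep_range s : 0 <= ppc s <= 3 -> 0 <= ppc (pstep s) <= 3.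
Proof.
  destruct s as [l v u w r t]; unfold pstep, loc_start, loc_loop1, loc_loop2, loc_end; cbn.
  case_Z_tests; cbn; lia.
Qed.

Lemma px_pstep s : px (pstep s) = px s.
Proof. destruct s as [l v u w r t]; unfold pstep; case_Z_tests; reflexivity. Qed.

Definition prog_init (v : Z) : PState := mkPS loc_start v v (2 * v) 0 0.

Definition prun (k : nat) (v : Z) : PState := Nat.iter k pstep (prog_init v).

Definition prog_inv (s : PState) (v : Z) : Prop :=
  0 < v /\ px s = v /\
  ((ppc s = 0 /\ pz1 s = v /\ pz2 s = 2 * v /\ py1 s = 0 /\ py2 s = 0) \/
   (ppc s = 1 /\ 0 <= pz1 s /\ py1 s = (v - pz1 s) * v /\ pz2 s = 2 * v /\ py2 s = 0) \/
   (ppc s = 2 /\ 0 <= pz2 s /\ py1 s = v * v /\ py2 s = (2 * v - pz2 s) * v) \/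
   (ppc s = 3 /\ py1 s = v * v /\ py2 s = 2 * (v * v))).

Lemma prog_inv_step s v : prog_inv s v -> prog_inv (pstep s) v.
Proof.
  destruct s as [l u z w r t];
    unfold prog_inv, pstep, loc_start, loc_loop1, loc_loop2, loc_end; cbn -[Z.mul].
  intros (Hv & -> & H). case_Z_tests; cbn -[Z.mul]; (split; [lia | split; [lia |]]);
    destruct H as [H | [H | [H | H]]]; try (exfalso; lia).
  all: first [ left; nia | right; left; nia | right; right; left; nia | right; right; right; nia ].
Qed.

Lemma prun_safe k v : 0 < v -> ppc (prun k v) = 3 -> py2 (prun k v) = 2 * py1 (prun k v).
Proof.
  intros Hv. assert (G : prog_inv (prun k v) v).
  { induction k as [| k IH]; [unfold prog_inv, prun, prog_init, loc_start; cbn; lia |].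
    exact (prog_inv_step _ _ IH). }
  destruct G as (_ & _ & G). lia.
Qed.

Lemma px_prun k v : px (prun k v) = v.
Proof.
  induction k as [| k IH]; [reflexivity |].
  change (prun (S k) v) with (pstep (prun k v)). rewrite px_pstep. exact IH.
Qed.

Definition pc_loop1 (k : nat) : Z := match k with O => loc_start | S _ => loc_loop1 end.

Lemma prun_loop1 k v : Z.of_nat k <= v ->
  prun k v = mkPS (pc_loop1 k) v (v - Z.of_nat k) (2 * v) (Z.of_nat k * v) 0.
Proof.
  induction k as [| k IH]; intros Hk.
  - unfold prun, prog_init; cbn. f_equal; lia.
  - change (prun (S k) v) with (pstep (prun k v)). rewrite IH by lia.
    destruct k; unfold pstep, pc_loop1, loc_start, loc_loop1, loc_loop2;
      case_Z_tests; cbn -[Z.mul Z.of_nat]; try lia; f_equal; lia.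
Qed.

Lemma prun_loop2_entry n v : (1 <= n)%nat -> Z.of_nat n = v ->
  prun (S n) v = mkPS loc_loop2 v 0 (2 * v) (v * v) 0.
Proof.
  intros Hn Hv. change (prun (S n) v) with (pstep (prun n v)). rewrite prun_loop1 by lia.
  destruct n as [| n]; [lia |].
  unfold pstep, pc_loop1, loc_start, loc_loop1, loc_loop2;
    case_Z_tests; cbn -[Z.mul Z.of_nat]; try lia; f_equal; nia.
Qed.

Lemma loop2_exit n v u r t :
  Nat.iter (S n) pstep (mkPS loc_loop2 v u (Z.of_nat n) r t) =
  mkPS loc_end v u 0 r (t + Z.of_nat n * v).
Proof.
  revert t; induction n as [| n IH]; intros t.
  - unfold pstep, loc_start, loc_loop1, loc_loop2; cbn. f_equal; lia.
  - rewrite Nat.iter_succ_r.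
    replace (pstep (mkPS loc_loop2 v u (Z.of_nat (S n)) r t))
      with (mkPS loc_loop2 v u (Z.of_nat n) r (t + v)).
    + rewrite IH. f_equal; lia.
    + unfold pstep, loc_start, loc_loop1, loc_loop2;
        case_Z_tests; cbn -[Z.mul Z.of_nat]; try lia; f_equal; lia.
Qed.

Definition state_formula (s : PState) : formula Var :=
  FAnd (FEq (TVar pc) (K (ppc s))) (FAnd (FEq (TVar x) (K (px s)))
  (FAnd (FEq (TVar z1) (K (pz1 s))) (FAnd (FEq (TVar z2) (K (pz2 s)))
  (FAnd (FEq (TVar y1) (K (py1 s))) (FEq (TVar y2) (K (py2 s))))))).

Lemma state_formula_iff e s : holds e (state_formula s) <-> pstate_of e = s.
Proof.
  destruct s as [l v u w r t];
    unfold state_formula, pstate_of, K; cbn [holds teval ppc px pz1 pz2 py1 py2].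
  split; [intros (-> & -> & -> & -> & -> & ->); reflexivity |].
  intros E; injection E; intros; repeat split; assumption.
Qed.

Definition loop1_formula (k : nat) : formula Var :=
  FAnd (FLt (K (Z.of_nat k)) (TVar x))
  (FAnd (FEq (TVar pc) (K (pc_loop1 k)))
  (FAnd (FEq (TVar z1) (TAdd (TVar x) (K (- Z.of_nat k))))
  (FAnd (FEq (TVar z2) (TMul 2 (TVar x)))
  (FAnd (FEq (TVar y1) (TMul (Z.of_nat k) (TVar x)))
        (FEq (TVar y2) (K 0)))))).

Lemma loop1_formula_iff e k :
  holds e (loop1_formula k) <-> Z.of_nat k < e x /\ pstate_of e = prun k (e x).
Proof.
  unfold loop1_formula, K, pstate_of; cbn [holds teval]. split.
  - intros (Hk & H1 & H2 & H3 & H4 & H5). split; [exact Hk |].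
    rewrite prun_loop1 by lia. f_equal; lia.
  - intros [Hk E]. rewrite prun_loop1 in E by lia.
    pose proof (f_equal ppc E); pose proof (f_equal pz1 E); pose proof (f_equal pz2 E);
      pose proof (f_equal py1 E); pose proof (f_equal py2 E); cbn [ppc pz1 pz2 py1 py2] in *.
    lia.
Qed.

Definition reach_formula (k : nat) : formula Var :=
  FOr (loop1_formula k) (FOrs (map (fun v => state_formula (prun k (Z.of_nat v))) (seq 1 k))).

Lemma reach_formula_iff e k :
  holds e (reach_formula k) <-> 0 < e x /\ pstate_of e = prun k (e x).
Proof.
  unfold reach_formula; cbn [holds]; rewrite loop1_formula_iff, holds_FOrs. split.
  - intros [[Hk E] | (f & Hin & Hf)]; [split; [lia | exact E] |].
    apply in_map_iff in Hin as (v & <- & Hv). apply in_seq in Hv.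
    apply state_formula_iff in Hf.
    assert (Hx : e x = Z.of_nat v) by (rewrite <- (px_prun k (Z.of_nat v)), <- Hf; reflexivity).
    split; [lia | rewrite Hx; exact Hf].
  - intros [Hx E]. destruct (Z_lt_le_dec (Z.of_nat k) (e x)) as [Hk | Hk]; [left; auto |].
    right. exists (state_formula (prun k (e x))). split.
    + apply in_map_iff. exists (Z.to_nat (e x)). split.
      * rewrite Z2Nat.id by lia. reflexivity.
      * apply in_seq. lia.
    + apply state_formula_iff. exact E.
Qed.

Definition exec (j : nat) (i : instr) (a b : nat) : config :=
  match i with
  | Inc k => let '(d1, d2) := setc k (S (getc k a b)) a b in (S j, d1, d2)
  | Dec k => let '(d1, d2) := setc k (Nat.pred (getc k a b)) a b in (S j, d1, d2)
  | Test k t => if Nat.eqb (getc k a b) 0 then (t, a, b) else (S j, a, b)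
  end.

Definition mnext (prog : list instr) (s : config) : config :=
  let '(j, a, b) := s in
  match nth_error prog (j - 1) with Some i => exec j i a b | None => s end.

Definition running (prog : list instr) (s : config) : Prop :=
  let '(j, _, _) := s in (1 <= j < mN prog)%nat.

Lemma mstep_iff prog s t : mstep prog s t <-> running prog s /\ t = mnext prog s.
Proof.
  destruct s as [[j a] b]; cbn [mstep running mnext]. split.
  - intros [Hr (i & Hi & Ht)]. split; [exact Hr |]. rewrite Hi.
    destruct i as [[] | [] | [] t']; cbn in *; auto; destruct Nat.eqb; auto.
  - intros [Hr ->]. split; [exact Hr |].
    destruct (nth_error prog (j - 1)) as [i |] eqn:E.
    + exists i. split; [reflexivity |].
      destruct i as [[] | [] | [] t']; cbn; auto; destruct Nat.eqb; auto.
    + apply nth_error_None in E. unfold mN in Hr. lia.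
Qed.

Definition enc (e : Var -> Z) (s : config) : Prop :=
  let '(j, a, b) := s in e q = Z.of_nat j /\ e c1 = Z.of_nat a /\ e c2 = Z.of_nat b.

Lemma effect_iff e e' j i a b : e c1 = Z.of_nat a -> e c2 = Z.of_nat b ->
  (holds (join e e') (effect j i) <-> enc e' (exec j i a b)).
Proof.
  intros Ha Hb.
  destruct i as [[] | [] | [] t]; unfold effect, keeps, keep, FNeq, Vu, Vp, K, cvar, other;
    cbn -[Z.of_nat]; try destruct (Nat.eqb_spec a 0); try destruct (Nat.eqb_spec b 0);
    cbn -[Z.of_nat]; lia.
Qed.

Lemma TR_M_from_iff ee l j : holds ee (FOrs (TR_M_from j l)) <->
  exists idx i, nth_error l idx = Some i /\ ee (inl q) = Z.of_nat (j + idx) /\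
                holds ee (effect (j + idx) i).
Proof.
  revert j; induction l as [| i l IH]; intros j; cbn [TR_M_from FOrs fold_right holds].
  - split; [tauto |]. intros (idx & i & H & _). destruct idx; discriminate.
  - fold (FOrs (TR_M_from (S j) l)). rewrite IH. split.
    + intros [[H1 H2] | (idx & i' & H1 & H2 & H3)].
      * exists 0%nat, i. rewrite Nat.add_0_r. auto.
      * exists (S idx), i'. rewrite <- Nat.add_succ_comm. auto.
    + intros (idx & i' & H1 & H2 & H3). destruct idx as [| idx]; cbn in H1.
      * left. injection H1 as <-. rewrite Nat.add_0_r in *. auto.
      * right. exists idx, i'. rewrite Nat.add_succ_comm. auto.
Qed.

Lemma TR_M_iff prog e e' s : enc e s ->
  (holds (join e e') (TR_M prog) <-> running prog s /\ enc e' (mnext prog s)).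
Proof.
  destruct s as [[j a] b]. intros (Hq & Ha & Hb).
  unfold TR_M. rewrite TR_M_from_iff. cbn [running mnext join]. split.
  - intros (idx & i & Hi & Hj & He). rewrite Hq in Hj.
    assert (j = S idx) as -> by lia.
    assert (idx < length prog)%nat by (apply nth_error_Some; congruence).
    replace (S idx - 1)%nat with idx by lia. rewrite Hi.
    split; [unfold mN; lia |]. apply (effect_iff e e' _ _ a b Ha Hb). exact He.
  - intros [Hr Henc]. destruct (nth_error prog (j - 1)) as [i |] eqn:E.
    + exists (j - 1)%nat, i. replace (1 + (j - 1))%nat with j by lia.
      split; [exact E |]. split; [exact Hq |].
      apply (effect_iff e e' j i a b Ha Hb). exact Henc.
    + apply nth_error_None in E. unfold mN in Hr. lia.
Qed.

(* The configuration of M after k steps (frozen once M halts). *)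
Definition mrun (prog : list instr) (k : nat) : config :=
  Nat.iter k (mnext prog) (1%nat, 0%nat, 0%nat).

Lemma mreach_mrun prog s : mreach prog s -> exists k, s = mrun prog k.
Proof.
  induction 1 as [| s t _ [k ->] Hst].
  - exists 0%nat. reflexivity.
  - exists (S k). apply mstep_iff in Hst as [_ ->]. reflexivity.
Qed.

(* Each step increases the counters by at most one; jumps stay in 1..N by well-formedness. *)
Definition in_bounds (prog : list instr) (n : nat) (s : config) : Prop :=
  let '(j, a, b) := s in (1 <= j <= mN prog /\ a <= n /\ b <= n)%nat.

Lemma mnext_bounds prog n s : wf_machine prog -> running prog s -> in_bounds prog n s ->
  in_bounds prog (S n) (mnext prog s).
Proof.
  intros Hwf. destruct s as [[j a] b]; cbn [running in_bounds mnext]. intros Hr Hb.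
  destruct (nth_error prog (j - 1)) as [i |] eqn:E;
    [| apply nth_error_None in E; unfold mN in *; lia].
  destruct i as [[] | [] | [] t]; cbn; unfold mN in *; try lia.
  all: pose proof (Hwf _ _ (nth_error_In _ _ E)); destruct Nat.eqb; cbn; unfold mN in *; lia.
Qed.

Lemma nonhalting_run prog : wf_machine prog -> ~ halts prog -> forall k,
  mreach prog (mrun prog k) /\ running prog (mrun prog k) /\ in_bounds prog k (mrun prog k).
Proof.
  intros Hwf Hnh.
  assert (Hrun : forall s n, mreach prog s -> in_bounds prog n s -> running prog s).
  { intros [[j a] b] n Hreach Hb. cbn in Hb |- *. split; [lia |].
    destruct (Nat.eq_dec j (mN prog)) as [-> | Hj]; [| lia].
    exfalso. apply Hnh. exists a, b. exact Hreach. }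
  induction k as [| k (Hreach & Hr & Hb)].
  - assert (Hreach : mreach prog (mrun prog 0)) by constructor.
    split; [exact Hreach |]. split; [apply (Hrun _ 0%nat Hreach) |]; cbn; unfold mN; lia.
  - assert (Hreach' : mreach prog (mrun prog (S k))).
    { apply (mreach_step _ _ _ Hreach). apply mstep_iff. split; [exact Hr | reflexivity]. }
    assert (Hb' := mnext_bounds _ _ _ Hwf Hr Hb).
    split; [exact Hreach' |]. split; [exact (Hrun _ _ Hreach' Hb') | exact Hb'].
Qed.

Lemma T_comp_init_iff prog e :
  holds e (ts_init (T_comp prog)) <->
  0 < e x /\ pstate_of e = prog_init (e x) /\ enc e (1%nat, 0%nat, 0%nat).
Proof.
  unfold T_comp, Init_prog, pstate_of, prog_init, K, loc_start; cbn -[Z.mul]. split.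
  - intros ((H1 & H2 & H3 & H4 & H5 & H6) & H7 & H8 & H9).
    rewrite H1, H3, H4, H5, H6. auto.
  - intros (Hx & E & Hq & Ha & Hb).
    pose proof (f_equal ppc E); pose proof (f_equal pz1 E); pose proof (f_equal pz2 E);
      pose proof (f_equal py1 E); pose proof (f_equal py2 E); cbn [ppc pz1 pz2 py1 py2] in *.
    lia.
Qed.

Lemma T_comp_step_iff prog e e' s : enc e s ->
  (holds (join e e') (ts_tr (T_comp prog)) <->
   running prog s /\ 0 <= e pc <= 3 /\ pstate_of e' = pstep (pstate_of e) /\
   enc e' (mnext prog s)).
Proof.
  intros Hs. unfold T_comp, ts_tr; cbn [holds].
  rewrite TR_prog_iff, (TR_M_iff prog e e' s Hs).
  assert (running prog s -> ~ holds (join e e') (FEq (Vu q) (K (Z.of_nat (mN prog))))).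
  { destruct s as [[j a] b]; cbn in Hs |- *. unfold mN in *. lia. }
  unfold FNeq. cbn [holds]. tauto.
Qed.

(** * If M halts, T_comp has a QFLIA inductive invariant *)

Definition config_formula (s : config) : formula Var :=
  let '(j, a, b) := s in
  FAnd (FEq (TVar q) (K (Z.of_nat j)))
       (FAnd (FEq (TVar c1) (K (Z.of_nat a))) (FEq (TVar c2) (K (Z.of_nat b)))).

Lemma config_formula_iff e s : holds e (config_formula s) <-> enc e s.
Proof. destruct s as [[j a] b]; reflexivity. Qed.

Definition halting_inv (prog : list instr) (n : nat) : formula Var :=
  FOrs (map (fun k => FAnd (config_formula (mrun prog k)) (reach_formula k)) (seq 0 (S n))).

Lemma halting_inv_iff prog n e : holds e (halting_inv prog n) <->
  exists k, (k <= n)%nat /\ enc e (mrun prog k) /\ 0 < e x /\ pstate_of e = prun k (e x).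
Proof.
  unfold halting_inv. rewrite holds_FOrs. split.
  - intros (f & Hin & Hf). apply in_map_iff in Hin as (k & <- & Hk). apply in_seq in Hk.
    destruct Hf as [Hc Hr]. apply config_formula_iff in Hc. apply reach_formula_iff in Hr.
    exists k. split; [lia | tauto].
  - intros (k & Hk & Hc & Hr).
    exists (FAnd (config_formula (mrun prog k)) (reach_formula k)). split.
    + apply in_map_iff. exists k. split; [reflexivity | apply in_seq; lia].
    + split; [apply config_formula_iff; exact Hc | apply reach_formula_iff; exact Hr].
Qed.

(* If M halts after n steps, no product run is longer than n, so [halting_inv] is inductive. *)
Lemma halting_invariant prog n a b : mrun prog n = (mN prog, a, b) ->
  inductive_invariant (T_comp prog) P_prop (halting_inv prog n).
Proof.
  intros Hn. split; [| split].
  - intros e; cbn [holds]. rewrite T_comp_init_iff, halting_inv_iff. intros (Hx & Hps & Hc).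
    exists 0%nat. split; [lia |]. split; [exact Hc |]. split; [exact Hx | exact Hps].
  - apply consecution_iff. intros e e'. rewrite !halting_inv_iff.
    intros (k & Hk & Hc & Hx & Hps) Hstep.
    apply (T_comp_step_iff _ _ _ _ Hc) in Hstep as (Hr & _ & Hps' & Hc').
    assert (Hkn : k <> n) by (intros ->; rewrite Hn in Hr; cbn in Hr; lia).
    assert (Hx' : e' x = e x).
    { apply (f_equal px) in Hps'. rewrite px_pstep in Hps'. exact Hps'. }
    exists (S k). split; [lia |]. split; [exact Hc' |]. split; [lia |].
    rewrite Hx', Hps', Hps. reflexivity.
  - intros e; cbn [holds]. rewrite halting_inv_iff. intros (k & _ & _ & Hx & Hps).
    unfold P_prop, K, loc_end; cbn -[Z.mul]. intros Hpc.
    pose proof (prun_safe k (e x) Hx) as Hsafe. rewrite <- Hps in Hsafe. exact (Hsafe Hpc).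
Qed.

(** * If M does not halt, T_comp has no QFLIA inductive invariant *)

Definition Var_eq_dec (a b : Var) : {a = b} + {a <> b}.
Proof. decide equality. Defined.

Definition product_val (s : PState) (cf : config) : Var -> Z :=
  fun v => match v with
  | pc => ppc s | x => px s | z1 => pz1 s | z2 => pz2 s | y1 => py1 s | y2 => py2 s
  | q => Z.of_nat (fst (fst cf)) | c1 => Z.of_nat (snd (fst cf)) | c2 => Z.of_nat (snd cf)
  end.

Lemma pstate_of_product_val s cf : pstate_of (product_val s cf) = s.
Proof. destruct s; reflexivity. Qed.

Lemma enc_product_val s cf : enc (product_val s cf) cf.
Proof. destruct cf as [[j a] b]; cbn; auto. Qed.

Lemma invariant_step prog I s k :
  inductive_invariant (T_comp prog) P_prop I -> running prog (mrun prog k) ->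
  0 <= ppc s <= 3 ->
  holds (product_val s (mrun prog k)) I -> holds (product_val (pstep s) (mrun prog (S k))) I.
Proof.
  intros (_ & Hind & _) Hr Hpc HI. rewrite consecution_iff in Hind.
  apply (Hind _ _ HI). apply (T_comp_step_iff _ _ _ _ (enc_product_val s (mrun prog k))).
  rewrite !pstate_of_product_val.
  split; [exact Hr | split; [exact Hpc | split; [reflexivity | apply enc_product_val]]].
Qed.

Lemma invariant_iter prog I s k :
  inductive_invariant (T_comp prog) P_prop I -> (forall m, running prog (mrun prog m)) ->
  0 <= ppc s <= 3 -> holds (product_val s (mrun prog k)) I ->
  forall n, holds (product_val (Nat.iter n pstep s) (mrun prog (n + k))) I.
Proof.
  intros Hinv Hr Hpc HI n. induction n as [| n IH]; [exact HI |].
  apply (invariant_step _ _ _ _ Hinv (Hr _)); [| exact IH].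
  clear IH. induction n as [| n IHn]; [exact Hpc | apply pstep_range; exact IHn].
Qed.

Lemma invariant_loop2_entry prog I n :
  inductive_invariant (T_comp prog) P_prop I -> (forall m, running prog (mrun prog m)) ->
  (1 <= n)%nat ->
  holds (product_val (mkPS loc_loop2 (Z.of_nat n) 0 (2 * Z.of_nat n)
                           (Z.of_nat n * Z.of_nat n) 0) (mrun prog (S n))) I.
Proof.
  intros Hinv Hr Hn. rewrite <- (prun_loop2_entry n (Z.of_nat n)) by (reflexivity || lia).
  assert (Hinit : holds (product_val (prog_init (Z.of_nat n)) (mrun prog 0)) I).
  { apply (proj1 Hinv). apply T_comp_init_iff.
    split; [cbn; lia |]. split; [reflexivity | apply enc_product_val]. }
  assert (Hpc : 0 <= ppc (prog_init (Z.of_nat n)) <= 3) by (cbn; unfold loc_start; lia).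
  pose proof (invariant_iter prog I _ 0 Hinv Hr Hpc Hinit (S n)) as H.
  rewrite Nat.add_0_r in H. exact H.
Qed.

(* The invariant cannot separate y1 = v*v from the unreachable y1 = v*v + 1 at loop2 entry:
   all other variables are at most 2v + N + 1, which is small against v*v. *)
Lemma invariant_perturb_y1 prog I n v cf :
  in_bounds prog n cf -> Z.of_nat n <= v + 1 -> 3 * fsize I + Z.of_nat (mN prog) + 4 <= v ->
  holds (product_val (mkPS loc_loop2 v 0 (2 * v) (v * v) 0) cf) I ->
  holds (product_val (mkPS loc_loop2 v 0 (2 * v) (v * v + 1) 0) cf) I.
Proof.
  intros Hb Hn Hv. pose proof (fsize_nonneg I) as HC.
  set (W := 2 * v + Z.of_nat (mN prog) + 1).
  set (e := product_val (mkPS loc_loop2 v 0 (2 * v) (v * v) 0) cf).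
  assert (Hagree : forall z, z <> y1 ->
            e z = product_val (mkPS loc_loop2 v 0 (2 * v) (v * v + 1) 0) cf z).
  { intros [] Hz; reflexivity || contradiction. }
  assert (Hbound : forall z, z <> y1 -> Z.abs (e z) <= W).
  { destruct cf as [[j a] b]. cbn in Hb. intros [] Hz; try congruence;
      unfold e, product_val, W, loc_loop2; cbn [fst snd ppc px pz1 pz2 py1 py2];
      unfold mN in *; lia. }
  assert (Hsize : fsize I * W < v * v).
  { unfold W. assert (v * v >= v * (3 * fsize I + Z.of_nat (mN prog) + 4)) by nia. nia. }
  apply (holds_large_value Var Var_eq_dec y1 I e _ W Hagree Hbound);
    [unfold W; lia | exact Hsize | cbn; lia].
Qed.

Lemma invariant_loop2_exit prog I n k v u r t :
  inductive_invariant (T_comp prog) P_prop I -> (forall m, running prog (mrun prog m)) ->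
  holds (product_val (mkPS loc_loop2 v u (Z.of_nat n) r t) (mrun prog k)) I ->
  holds (product_val (mkPS loc_end v u 0 r (t + Z.of_nat n * v)) (mrun prog (S n + k))) I.
Proof.
  intros Hinv Hr HI. rewrite <- loop2_exit.
  apply (invariant_iter _ _ _ _ Hinv Hr); [cbn; unfold loc_loop2; lia | exact HI].
Qed.

Lemma no_invariant_if_nonhalting prog I : wf_machine prog -> ~ halts prog ->
  ~ inductive_invariant (T_comp prog) P_prop I.
Proof.
  intros Hwf Hnh Hinv. pose proof (nonhalting_run prog Hwf Hnh) as Hrun.
  assert (Hrunning : forall m, running prog (mrun prog m)) by (intros m; apply Hrun).
  pose proof (fsize_nonneg I) as HC.
  set (n := Z.to_nat (3 * fsize I + Z.of_nat (mN prog) + 4)).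
  set (v := Z.of_nat n).
  pose proof (invariant_loop2_entry prog I n Hinv Hrunning ltac:(unfold n; lia)) as Hentry.
  apply (invariant_perturb_y1 prog I (S n) v) in Hentry;
    [| apply Hrun | unfold v; lia | unfold v, n; lia].
  replace (2 * v) with (Z.of_nat (2 * n)) in Hentry by (unfold v; lia).
  apply (invariant_loop2_exit _ _ _ _ _ _ _ _ Hinv Hrunning), (proj2 (proj2 Hinv)) in Hentry.
  unfold P_prop, K, loc_end in Hentry. cbn -[Z.mul] in Hentry.
  specialize (Hentry eq_refl). unfold v in Hentry. nia.
Qed.

Theorem mainTheorem3 (prog : list instr) (Hwf : wf_machine prog) :
  (exists I : formula Var, inductive_invariant (T_comp prog) P_prop I) <-> halts prog.
Proof.
  split.
  - intros [I Hinv]. apply NNPP. intros Hnh.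
    exact (no_invariant_if_nonhalting prog I Hwf Hnh Hinv).
  - intros (a & b & Hreach). apply mreach_mrun in Hreach as [n Hn].
    exists (halting_inv prog n). apply (halting_invariant prog n a b). symmetry. exact Hn.
Qed.
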